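(* Let $\sigma:\mathbb R\to\mathbb R$ be a real-analytic function such that $\sigma^{(n_j)}(0)\neq0$ for an infinite sequence of distinct indices $\{n_j\}_{j=1}^\infty$. Let $d\in\mathbb N$ and let $w_1,\dots,w_m\in\mathbb R^d\setminus\{0\}$ satisfy $w_k\neq\pm w_j$ for all $1\leq k<j\leq m$. Then the set of functions on $\mathbb R^d$ $$\{\sigma(w_i^\top x),\ \sigma'(w_i^\top x)x_1,\ \dots,\ \sigma'(w_i^\top x)x_d\}_{i=1}^m$$ (where $x_t$ denotes the $t$-th coordinate of $x$) consists of $m(d+1)$ linearly independent functions. *)

From Stdlib Require Import Reals.
From Coquelicot Require Export Coquelicot.
Open Scope R_scope.

Fixpoint sumR (n : nat) (f : nat -> R) : R :=
  match n with
  | O => 0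
  | S k => sumR k f + f k
  end.

(* Vectors of R^d are represented as functions nat -> R, only the
   coordinates t < d being relevant. *)
Definition dotR (d : nat) (w x : nat -> R) : R := sumR d (fun t => w t * x t).

Definition real_analytic (f : R -> R) : Prop :=
  forall x0 : R, exists r : R, 0 < r /\ exists a : nat -> R,
    forall x : R, Rabs (x - x0) < r -> is_pseries a (x - x0) (f x).

From Stdlib Require Import Reals Lra Lia List Classical FinFun.
From Coquelicot Require Import Coquelicot.
Open Scope R_scope.

(** Restrict the identity to the curve [x_t = s * l^t].  Then [w_i . x = s u_i]
    and [sum_t b_it x_t = s beta_i], where [u_i], [beta_i] are the polynomials in
    [l] with coefficients [w_i], [b_i]; expanding [sigma] at [0], the coefficient
    of [s^n] gives [c_n * sum_i (a_i u_i^n + n beta_i u_i^(n-1)) = 0], and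
    [c_n <> 0] for infinitely many [n].  For [l] large the [u_i] are nonzero
    with pairwise distinct absolute values, and an exponential polynomial
    [sum_i (p_i + n q_i) z_i^n] vanishing infinitely often with distinct [|z_i|]
    is trivial: divide by the largest [|z_i|^n] carrying a nonzero coefficient.
    Hence [a_i = 0] and [beta_i(l) = 0] for all large [l], so [b_i = 0]. *)

Lemma sumR_ext n f g : (forall i, (i < n)%nat -> f i = g i) -> sumR n f = sumR n g.
Proof. induction n; simpl; intros H; auto. rewrite IHn; [rewrite H|]; auto; intros; apply H; lia. Qed.

Lemma sumR_plus n f g : sumR n (fun i => f i + g i) = sumR n f + sumR n g.
Proof. induction n; simpl; [lra|]. rewrite IHn; lra. Qed.

Lemma sumR_minus n f g : sumR n (fun i => f i - g i) = sumR n f - sumR n g.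
Proof. induction n; simpl; [lra|]. rewrite IHn; lra. Qed.

Lemma sumR_scal n c f : sumR n (fun i => c * f i) = c * sumR n f.
Proof. induction n; simpl; [lra|]. rewrite IHn; lra. Qed.

Lemma sumR_abs n f : Rabs (sumR n f) <= sumR n (fun i => Rabs (f i)).
Proof.
  induction n; simpl; [rewrite Rabs_R0; lra|].
  eapply Rle_trans; [apply Rabs_triang|lra].
Qed.

Lemma sumR_le n f g : (forall i, (i < n)%nat -> f i <= g i) -> sumR n f <= sumR n g.
Proof.
  induction n; simpl; intros H; [lra|].
  assert (f n <= g n) by (apply H; lia).
  assert (sumR n f <= sumR n g) by (apply IHn; intros; apply H; lia).
  lra.
Qed.

Lemma sumR_nonneg n f : (forall i, (i < n)%nat -> 0 <= f i) -> 0 <= sumR n f.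
Proof.
  intros H. replace 0 with (sumR n (fun _ => 0)).
  - apply sumR_le; exact H.
  - induction n; simpl; [lra|]. rewrite IHn; [lra|]. intros; apply H; lia.
Qed.

Lemma sumR_split n f i : (i < n)%nat ->
  sumR n f = f i + sumR n (fun j => if Nat.eq_dec j i then 0 else f j).
Proof.
  induction n; simpl; intros H; [lia|].
  destruct (Nat.eq_dec n i) as [<-|Hni].
  - rewrite (sumR_ext n (fun j => if Nat.eq_dec j n then 0 else f j) f); [lra|].
    intros j Hj. destruct (Nat.eq_dec j n); [lia|auto].
  - rewrite (IHn ltac:(lia)); lra.
Qed.

Lemma sumR_term n f i : (forall j, (j < n)%nat -> 0 <= f j) -> (i < n)%nat -> f i <= sumR n f.
Proof.
  intros H Hi. rewrite (sumR_split n f i Hi).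
  assert (0 <= sumR n (fun j => if Nat.eq_dec j i then 0 else f j)); [|lra].
  apply sumR_nonneg. intros j Hj. destruct (Nat.eq_dec j i); [lra|auto].
Qed.

Lemma filter_forall_lt {T} (F : (T -> Prop) -> Prop) {FF : Filter F} m (P : nat -> T -> Prop) :
  (forall i, (i < m)%nat -> F (P i)) -> F (fun x => forall i, (i < m)%nat -> P i x).
Proof.
  induction m as [|m IH]; intros H.
  - apply filter_forall; intros; lia.
  - apply (filter_imp (fun x => (forall i, (i < m)%nat -> P i x) /\ P m x)).
    + intros x [Hlt Hm] i Hi. destruct (Nat.eq_dec i m) as [->|]; auto. apply Hlt; lia.
    + apply filter_and; [apply IH; intros; apply H; lia | apply H; lia].
Qed.

(** * Polynomials in one variable *)

Definition peval (d : nat) (v : nat -> R) (l : R) : R := dotR d v (fun t => l ^ t).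

Lemma peval_plus d v v' l : peval d (fun t => v t + v' t) l = peval d v l + peval d v' l.
Proof. unfold peval, dotR. rewrite <- sumR_plus. apply sumR_ext; intros; ring. Qed.

Lemma peval_minus d v v' l : peval d (fun t => v t - v' t) l = peval d v l - peval d v' l.
Proof. unfold peval, dotR. rewrite <- sumR_minus. apply sumR_ext; intros; ring. Qed.

Lemma peval_bound d v l : 1 <= l ->
  Rabs (peval d v l) * l <= sumR d (fun t => Rabs (v t)) * l ^ d.
Proof.
  intros Hl. unfold peval, dotR.
  eapply Rle_trans; [apply Rmult_le_compat_r; [lra|apply sumR_abs]|].
  rewrite Rmult_comm, <- sumR_scal, Rmult_comm, <- sumR_scal.
  apply sumR_le; intros t Ht.
  rewrite Rabs_mult, (Rabs_right (l ^ t)) by (apply Rle_ge, pow_le; lra).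
  replace (l * (Rabs (v t) * l ^ t)) with (Rabs (v t) * l ^ S t) by (simpl; ring).
  rewrite (Rmult_comm (l ^ d)).
  apply Rmult_le_compat_l; [apply Rabs_pos|apply Rle_pow; [lra|lia]].
Qed.

Lemma peval_eventually_nonzero d v : (exists t, (t < d)%nat /\ v t <> 0) ->
  Rbar_locally p_infty (fun l => peval d v l <> 0).
Proof.
  induction d as [|d IH]; intros [t [Ht Hv]]; [lia|].
  assert (Hsucc : forall l, peval (S d) v l = peval d v l + v d * l ^ d) by reflexivity.
  destruct (Req_dec (v d) 0) as [Hd|Hd].
  - apply (filter_imp (fun l => peval d v l <> 0)).
    + intros l; rewrite Hsucc, Hd; lra.
    + apply IH. exists t; split; [|exact Hv].
      destruct (Nat.eq_dec t d); [subst; contradiction|lia].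
  - set (C := sumR d (fun t => Rabs (v t))).
    assert (Hvd : 0 < Rabs (v d)) by (apply Rabs_pos_lt; exact Hd).
    exists (Rmax 1 (C / Rabs (v d))). intros l Hl Hzero.
    assert (Hl1 : 1 < l) by (eapply Rle_lt_trans; [apply Rmax_l|exact Hl]).
    assert (HlC : C < l * Rabs (v d)).
    { assert (Hlt : C / Rabs (v d) < l) by (eapply Rle_lt_trans; [apply Rmax_r|exact Hl]).
      apply (Rmult_lt_compat_r (Rabs (v d))) in Hlt; [|lra].
      unfold Rdiv in Hlt. rewrite Rmult_assoc, Rinv_l, Rmult_1_r in Hlt; lra. }
    assert (Hpd : 0 < l ^ d) by (apply pow_lt; lra).
    pose proof (peval_bound d v l ltac:(lra)) as Hb. fold C in Hb.
    replace (peval d v l) with (- (v d * l ^ d)) in Hb by (rewrite Hsucc in Hzero; lra).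
    rewrite Rabs_Ropp, Rabs_mult, (Rabs_right (l ^ d)) in Hb by lra.
    assert (C * l ^ d < l * Rabs (v d) * l ^ d) by (apply Rmult_lt_compat_r; lra).
    lra.
Qed.

Lemma Rabs_neq_of_minus_plus x y : x - y <> 0 -> x + y <> 0 -> Rabs x <> Rabs y.
Proof. unfold Rabs; destruct (Rcase_abs x), (Rcase_abs y); intros; lra. Qed.

Lemma peval_eventually_generic d m (w : nat -> nat -> R) :
  (forall i, (i < m)%nat -> exists t, (t < d)%nat /\ w i t <> 0) ->
  (forall k j, (k < j)%nat -> (j < m)%nat ->
      (exists t, (t < d)%nat /\ w k t <> w j t) /\
      (exists t, (t < d)%nat /\ w k t <> - w j t)) ->
  Rbar_locally p_infty (fun l =>
     (forall i, (i < m)%nat -> peval d (w i) l <> 0) /\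
     (forall i j, (i < m)%nat -> (j < m)%nat -> i <> j ->
        Rabs (peval d (w i) l) <> Rabs (peval d (w j) l))).
Proof.
  intros Hw0 Hwpm. apply filter_and.
  - apply (filter_forall_lt _ m (fun i l => peval d (w i) l <> 0)); intros i Hi. exact (peval_eventually_nonzero d (w i) (Hw0 i Hi)).
  - apply (filter_imp (fun l => forall j, (j < m)%nat -> forall k, (k < j)%nat ->
                          Rabs (peval d (w k) l) <> Rabs (peval d (w j) l))).
    + intros l Hl i j Hi Hj Hij.
      destruct (Nat.lt_ge_cases i j); [apply Hl; auto|].
      apply not_eq_sym, Hl; [auto|lia].
    + apply (filter_forall_lt _ m (fun j l => forall k, (k < j)%nat ->
                 Rabs (peval d (w k) l) <> Rabs (peval d (w j) l))); intros j Hj.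
      apply (filter_forall_lt _ j (fun k l => Rabs (peval d (w k) l) <> Rabs (peval d (w j) l))).
      intros k Hk.
      destruct (Hwpm k j Hk Hj) as [[t1 [Ht1 E1]] [t2 [Ht2 E2]]].
      apply (filter_imp (fun l => peval d (fun t => w k t - w j t) l <> 0 /\
                                   peval d (fun t => w k t + w j t) l <> 0)).
      * intros l [Hm Hp]. rewrite peval_minus in Hm. rewrite peval_plus in Hp.
        apply Rabs_neq_of_minus_plus; auto.
      * apply filter_and; apply peval_eventually_nonzero;
          [exists t1|exists t2]; split; auto; lra.
Qed.

(** * Exponential polynomials *)

Definition infinitely_often (S : nat -> Prop) : Prop := forall N, exists n, (N <= n)%nat /\ S n.

Lemma infinitely_often_eventually S P :
  infinitely_often S -> eventually P -> exists n, S n /\ P n.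
Proof. intros HS [N HN]. destruct (HS N) as [n [Hn Sn]]. exists n; auto. Qed.

Lemma injective_infinitely_often (nj : nat -> nat) :
  (forall j1 j2, nj j1 = nj j2 -> j1 = j2) -> infinitely_often (fun n => exists j, nj j = n).
Proof.
  intros Hinj N. apply NNPP; intro H.
  assert (Hlt : forall j, (nj j < N)%nat).
  { intros j. destruct (Nat.lt_ge_cases (nj j) N); auto. exfalso; apply H; exists (nj j); eauto. }
  assert (Hnd : NoDup (map nj (seq 0 (S N)))).
  { apply Injective_map_NoDup; [exact Hinj|apply seq_NoDup]. }
  assert (Hinc : incl (map nj (seq 0 (S N))) (seq 0 N)).
  { intros x Hx. apply in_map_iff in Hx. destruct Hx as [j [<- _]]. apply in_seq.
    specialize (Hlt j). lia. }
  pose proof (NoDup_incl_length Hnd Hinc) as Hlen.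
  rewrite length_map, !length_seq in Hlen. lia.
Qed.

Lemma CV_radius_const_1 : CV_radius (fun _ : nat => 1) = 1.
Proof.
  rewrite (CV_radius_finite_DAlembert _ 1); [f_equal; apply Rinv_1|intros; lra|lra|].
  eapply is_lim_seq_ext; [|apply is_lim_seq_const]. intros n; simpl.
  rewrite Rdiv_1_r, Rabs_R1; auto.
Qed.

(** [sum n r^(n-1)] is the derivative of the geometric series, hence converges for [r < 1]. *)
Lemma is_lim_seq_INR_mult_pow r : 0 <= r < 1 -> is_lim_seq (fun n => INR n * r ^ n) 0.
Proof.
  intros Hr.
  assert (H : ex_pseries (PS_derive (fun _ : nat => 1)) r).
  { apply ex_pseries_derive. rewrite CV_radius_const_1. simpl. rewrite Rabs_right; lra. }
  apply ex_series_lim_0 in H.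
  apply (is_lim_seq_le_le (fun _ => 0) _ (fun n => INR (S n) * r ^ n)).
  - intros n; split; [apply Rmult_le_pos; [apply pos_INR|apply pow_le; lra]|].
    apply Rmult_le_compat_r; [apply pow_le; lra|apply le_INR; lia].
  - apply is_lim_seq_const.
  - eapply is_lim_seq_ext; [|exact H]. intros n; simpl.
    rewrite pow_n_pow. unfold PS_derive, scal; simpl; unfold mult; simpl. ring.
Qed.

Lemma is_lim_seq_affine_mult_pow A B r : 0 <= r < 1 ->
  is_lim_seq (fun n => (A + INR n * B) * r ^ n) 0.
Proof.
  intros Hr.
  apply is_lim_seq_ext with (fun n => A * r ^ n + B * (INR n * r ^ n)); [intros; ring|].
  replace 0 with (A * 0 + B * 0) by ring.
  apply is_lim_seq_plus'; apply is_lim_seq_mult'; try apply is_lim_seq_const.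
  - apply is_lim_seq_geom; rewrite Rabs_right; lra.
  - apply is_lim_seq_INR_mult_pow; auto.
Qed.

Lemma is_lim_seq_sumR m (g : nat -> nat -> R) :
  (forall j, (j < m)%nat -> is_lim_seq (g j) 0) ->
  is_lim_seq (fun n => sumR m (fun j => g j n)) 0.
Proof.
  induction m; intros H; simpl; [apply is_lim_seq_const|].
  replace (Finite 0) with (Finite (0 + 0)) by (f_equal; ring).
  apply is_lim_seq_plus'; [apply IHm; intros|]; apply H; lia.
Qed.

Lemma affine_often_small p q (E : nat -> R) S :
  infinitely_often S -> is_lim_seq E 0 ->
  (forall n, S n -> Rabs (p + INR n * q) <= E n) -> p = 0 /\ q = 0.
Proof.
  intros HS HE Hb.
  assert (Hsmall : forall eps, 0 < eps -> eventually (fun n => E n < eps)).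
  { intros eps Heps. apply is_lim_seq_spec in HE. 
    apply (filter_imp (fun n => Rabs (E n - 0) < eps)); [|exact (HE (mkposreal _ Heps))].
    intros n Hn. rewrite Rminus_0_r in Hn. pose proof (Rle_abs (E n)); lra. }
  assert (Hq : q = 0).
  { apply NNPP; intro Hq. assert (Hqa : 0 < Rabs q) by (apply Rabs_pos_lt; auto).
    pose proof is_lim_seq_INR as Hinf. apply is_lim_seq_spec in Hinf.
    destruct (infinitely_often_eventually S _ HS
                (filter_and _ _ (Hsmall 1 Rlt_0_1) (Hinf ((Rabs p + 1) / Rabs q))))
      as [n [Sn [HEn Hn]]].
    assert (Rabs p + 1 < INR n * Rabs q).
    { apply (Rmult_lt_compat_r (Rabs q)) in Hn; auto. unfold Rdiv in Hn.
      rewrite Rmult_assoc, Rinv_l, Rmult_1_r in Hn; lra. }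
    assert (Rabs (INR n * q) <= Rabs (p + INR n * q) + Rabs p).
    { replace (INR n * q) with ((p + INR n * q) + - p) at 1 by ring.
      rewrite <- (Rabs_Ropp p). apply Rabs_triang. }
    rewrite Rabs_mult, (Rabs_right (INR n)) in H0 by (apply Rle_ge, pos_INR).
    specialize (Hb n Sn). lra. }
  split; [|exact Hq]. subst q.
  apply NNPP; intro Hp. assert (Hpa : 0 < Rabs p) by (apply Rabs_pos_lt; auto).
  destruct (infinitely_often_eventually S _ HS (Hsmall _ Hpa)) as [n [Sn HEn]].
  specialize (Hb n Sn). rewrite Rmult_0_r, Rplus_0_r in Hb. lra.
Qed.

Lemma Rabs_scaled_term a z M n : 0 < M ->
  Rabs (a * z ^ n * / M ^ n) = Rabs a * (Rabs z / M) ^ n.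
Proof.
  intros HM. unfold Rdiv.
  rewrite Rpow_mult_distr, pow_inv, !Rabs_mult, Rabs_inv, <- !RPow_abs.
  rewrite (Rabs_right M) by lra. ring.
Qed.

Lemma Rabs_affine_le p q n : Rabs (p + INR n * q) <= Rabs p + INR n * Rabs q.
Proof.
  eapply Rle_trans; [apply Rabs_triang|].
  rewrite Rabs_mult, (Rabs_right (INR n)) by (apply Rle_ge, pos_INR). lra.
Qed.

Lemma dominant_term_vanishes m p q z S i :
  infinitely_often S ->
  (forall n, S n -> sumR m (fun j => (p j + INR n * q j) * z j ^ n) = 0) ->
  (i < m)%nat -> z i <> 0 ->
  (forall j, (j < m)%nat -> j <> i -> Rabs (z j) <> Rabs (z i)) ->
  (forall j, (j < m)%nat -> Rabs (z i) < Rabs (z j) -> p j = 0 /\ q j = 0) ->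
  p i = 0 /\ q i = 0.
Proof.
  intros HS Hsum Hi Hz Hne Hbig.
  set (M := Rabs (z i)). assert (HM : 0 < M) by (apply Rabs_pos_lt; auto).
  set (T := fun n j => (p j + INR n * q j) * z j ^ n * / M ^ n).
  set (E := fun n => sumR m (fun j => if Nat.eq_dec j i then 0 else
                 (Rabs (p j) + INR n * Rabs (q j)) * (Rabs (z j) / M) ^ n)).
  apply (affine_often_small _ _ E S HS).
  - apply is_lim_seq_sumR; intros j Hj.
    destruct (Nat.eq_dec j i) as [_|Hji]; [apply is_lim_seq_const|].
    destruct (Rlt_dec (Rabs (z j)) M) as [Hlt|Hge].
    + apply is_lim_seq_affine_mult_pow. split.
      * apply Rmult_le_pos; [apply Rabs_pos|left; apply Rinv_0_lt_compat; lra].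
      * apply (Rmult_lt_reg_r M); auto. unfold Rdiv; rewrite Rmult_assoc, Rinv_l; lra.
    + assert (M < Rabs (z j)) by (specialize (Hne j Hj Hji); fold M in Hne; lra).
      destruct (Hbig j Hj H) as [-> ->].
      eapply is_lim_seq_ext; [|apply is_lim_seq_const]. intros n; simpl.
      rewrite Rabs_R0. ring.
  - intros n Sn.
    assert (HT : sumR m (T n) = 0).
    { unfold T. rewrite (sumR_ext _ _ (fun j => / M ^ n * ((p j + INR n * q j) * z j ^ n)))
        by (intros; ring).
      rewrite sumR_scal, Hsum; auto; ring. }
    rewrite (sumR_split _ _ i Hi) in HT.
    replace (Rabs (p i + INR n * q i)) with (Rabs (T n i)).
    2: { unfold T. rewrite Rabs_scaled_term by auto. fold M.
         unfold Rdiv. rewrite Rinv_r, pow1 by lra. ring. }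
    replace (T n i) with (- sumR m (fun j => if Nat.eq_dec j i then 0 else T n j)) by lra.
    rewrite Rabs_Ropp. eapply Rle_trans; [apply sumR_abs|]. apply sumR_le.
    intros j Hj. destruct (Nat.eq_dec j i); [rewrite Rabs_R0; lra|].
    unfold T. rewrite Rabs_scaled_term by auto.
    apply Rmult_le_compat_r; [|apply Rabs_affine_le].
    apply pow_le, Rmult_le_pos; [apply Rabs_pos|left; apply Rinv_0_lt_compat; lra].
Qed.

Lemma exists_argmax_lt m (P : nat -> Prop) (f : nat -> R) :
  (exists i, (i < m)%nat /\ P i) ->
  exists i, (i < m)%nat /\ P i /\ forall j, (j < m)%nat -> P j -> f j <= f i.
Proof.
  induction m as [|m IH]; intros [i [Hi Pi]]; [lia|].
  destruct (classic (exists i, (i < m)%nat /\ P i)) as [Hex|Hnex].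
  - destruct (IH Hex) as [k [Hk [Pk Hmax]]].
    destruct (classic (P m /\ f k < f m)) as [[Pm Hkm]|Hkm].
    + exists m; repeat split; auto. intros j Hj Pj.
      destruct (Nat.eq_dec j m) as [->|]; [lra|].
      assert (f j <= f k) by (apply Hmax; auto; lia). lra.
    + exists k; repeat split; auto. intros j Hj Pj.
      destruct (Nat.eq_dec j m) as [->|]; [|apply Hmax; auto; lia].
      apply Rnot_lt_le. intro; apply Hkm; auto.
  - exists m. assert (i = m) as ->.
    { destruct (Nat.eq_dec i m); auto. exfalso; apply Hnex; exists i; split; auto; lia. }
    repeat split; auto. intros j Hj Pj.
    destruct (Nat.eq_dec j m) as [->|]; [lra|].
    exfalso; apply Hnex; exists j; split; auto; lia.
Qed.

Lemma exp_poly_coef_zero m p q z (S : nat -> Prop) :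
  infinitely_often S ->
  (forall n, S n -> sumR m (fun j => (p j + INR n * q j) * z j ^ n) = 0) ->
  (forall i, (i < m)%nat -> z i <> 0) ->
  (forall i j, (i < m)%nat -> (j < m)%nat -> i <> j -> Rabs (z i) <> Rabs (z j)) ->
  forall i, (i < m)%nat -> p i = 0 /\ q i = 0.
Proof.
  intros HS Hsum Hz Hne.
  apply NNPP; intro H. apply not_all_ex_not in H. destruct H as [i0 H].
  destruct (exists_argmax_lt m (fun i => ~ (p i = 0 /\ q i = 0)) (fun i => Rabs (z i)))
    as [i [Hi [Pi Hmax]]].
  { exists i0. apply imply_to_and in H. auto. }
  apply Pi, (dominant_term_vanishes m p q z S i); auto.
  intros j Hj Hlt. apply NNPP; intro Pj. specialize (Hmax j Hj Pj). lra.
Qed.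

(** * Power series *)

Lemma is_pseries_R (a : nat -> R) (x l : R) :
  is_pseries a x l <-> is_series (fun n => a n * x ^ n) l.
Proof.
  unfold is_pseries; split; apply is_series_ext; intros n;
  unfold scal; simpl; unfold mult; simpl;
  rewrite Rmult_comm; f_equal; try apply pow_n_pow; try (symmetry; apply pow_n_pow).
Qed.

Lemma is_series_sumR m (f : nat -> nat -> R) (l : nat -> R) :
  (forall i, (i < m)%nat -> is_series (f i) (l i)) ->
  is_series (fun k => sumR m (fun i => f i k)) (sumR m l).
Proof.
  induction m; intros H; simpl.
  - eapply filterlim_ext; [|apply filterlim_const].
    intros n; simpl. rewrite sum_n_const. ring.
  - apply (is_series_plus (fun k => sumR m (fun i => f i k)) (f m));
      [apply IHm; intros|]; apply H; lia.
Qed.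

Lemma CV_radius_gt_of_ex_pseries (a : nat -> R) (r : R) :
  (forall x, Rabs x < r -> ex_pseries a x) ->
  forall y, Rabs y < r -> Rbar_lt (Rabs y) (CV_radius a).
Proof.
  intros H y Hy. set (x := (Rabs y + r) / 2).
  assert (Hx : Rabs x = x) by (apply Rabs_right; pose proof (Rabs_pos y); unfold x; lra).
  destruct (H x ltac:(rewrite Hx; unfold x; lra)) as [l Hl].
  apply is_pseries_R in Hl.
  assert (Hlim : is_lim_seq (fun n => a n * x ^ n) 0) by (apply ex_series_lim_0; exists l; auto).
  assert (Hle : Rbar_le (Rabs x) (CV_radius a)).
  { apply Rbar_not_lt_le. intro Hc. exact (CV_disk_outside a x Hc Hlim). }
  rewrite Hx in Hle. eapply Rbar_lt_le_trans; [|exact Hle]. simpl. unfold x; lra.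
Qed.

Lemma pseries_zero_coef (e : nat -> R) (del : R) : 0 < del ->
  (forall s, Rabs s < del -> is_pseries e s 0) -> forall n, e n = 0.
Proof.
  intros Hdel He n.
  assert (Hcv : Rbar_lt 0 (CV_radius e)).
  { rewrite <- Rabs_R0. apply (CV_radius_gt_of_ex_pseries e del); [|rewrite Rabs_R0; auto].
    intros x Hx; eexists; apply He; auto. }
  apply (PSeries_ext_recip e (fun _ => 0) n Hcv); [rewrite CV_radius_const_0; simpl; auto|].
  exists (mkposreal _ Hdel). intros t Ht.
  unfold ball in Ht; simpl in Ht; unfold AbsRing_ball, abs, minus, plus, opp in Ht; simpl in Ht.
  rewrite Ropp_0, Rplus_0_r in Ht.
  rewrite PSeries_const_0. apply is_pseries_unique, He; auto.
Qed.

Section AnalyticAtZero.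

Variables (sig : R -> R) (r : R) (c : nat -> R).
Hypothesis Hr : 0 < r.
Hypothesis Hc : forall x, Rabs x < r -> is_pseries c x (sig x).

Lemma CV_radius_gt y : Rabs y < r -> Rbar_lt (Rabs y) (CV_radius c).
Proof. apply CV_radius_gt_of_ex_pseries. intros x Hx; eexists; apply Hc; auto. Qed.

Lemma locally_eq_PSeries y : Rabs y < r -> locally y (fun t => sig t = PSeries c t).
Proof.
  intros Hy. assert (He : 0 < r - Rabs y) by lra.
  exists (mkposreal _ He). intros t Ht.
  unfold ball in Ht; simpl in Ht; unfold AbsRing_ball, abs, minus, plus, opp in Ht; simpl in Ht.
  symmetry; apply is_pseries_unique, Hc.
  replace t with ((t + - y) + y) by ring. eapply Rle_lt_trans; [apply Rabs_triang|lra].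
Qed.

Lemma is_pseries_Derive y : Rabs y < r -> is_pseries (PS_derive c) y (Derive sig y).
Proof.
  intros Hy. rewrite (Derive_ext_loc _ _ _ (locally_eq_PSeries y Hy)).
  apply is_pseries_derive, CV_radius_gt; auto.
Qed.

Lemma Derive_n_at_0 n : Derive_n sig n 0 = c n * INR (Factorial.fact n).
Proof.
  assert (H0 : Rabs 0 < r) by (rewrite Rabs_R0; auto).
  rewrite (Derive_n_ext_loc _ _ _ _ (locally_eq_PSeries 0 H0)).
  apply Derive_n_coef. rewrite <- Rabs_R0. apply CV_radius_gt; auto.
Qed.

Lemma is_pseries_neuron a u be s : Rabs (s * u) < r ->
  is_series (fun n => c n * (a * u ^ n + INR n * be * u ^ (n - 1)) * s ^ n)
            (a * sig (s * u) + Derive sig (s * u) * s * be).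
Proof.
  intros Hsu.
  assert (H1 := Hc _ Hsu). apply is_pseries_R in H1.
  apply (is_series_scal_l a) in H1.
  assert (H2 := is_pseries_Derive _ Hsu). apply is_pseries_R in H2.
  apply (is_series_scal_l (s * be)) in H2.
  assert (H3 : is_series (fun n => c n * INR n * be * u ^ (n - 1) * s ^ n)
                         (Derive sig (s * u) * s * be)).
  { apply is_series_decr_1.
    match goal with |- is_series _ ?l => replace l with (scal (s * be) (Derive sig (s * u))) end;
      [|unfold plus, opp, scal; simpl; unfold mult; simpl; ring].
    eapply is_series_ext; [|exact H2].
    intros k. unfold scal; simpl; unfold mult; simpl.
    replace (k - 0)%nat with k by lia. unfold PS_derive. rewrite Rpow_mult_distr. simpl. ring. }
  eapply is_series_ext; [|exact (is_series_plus _ _ _ _ H1 H3)].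
  intros n. unfold plus, scal; simpl; unfold mult; simpl. rewrite Rpow_mult_distr. ring.
Qed.

Lemma neuron_sum_coef m (u be a : nat -> R) :
  (forall s, sumR m (fun i => a i * sig (s * u i) + Derive sig (s * u i) * s * be i) = 0) ->
  forall n, c n * sumR m (fun i => a i * u i ^ n + INR n * be i * u i ^ (n - 1)) = 0.
Proof.
  intros Hid.
  set (U := 1 + sumR m (fun i => Rabs (u i))).
  assert (HU : 1 <= U).
  { pose proof (sumR_nonneg m (fun i => Rabs (u i)) (fun i _ => Rabs_pos (u i))). unfold U; lra. }
  assert (Hsmall : forall s i, Rabs s < r / U -> (i < m)%nat -> Rabs (s * u i) < r).
  { intros s i Hs Hi. rewrite Rabs_mult.
    assert (Rabs (u i) <= U).
    { pose proof (sumR_term m (fun i => Rabs (u i)) i (fun j _ => Rabs_pos (u j)) Hi). unfold U; lra. }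
    assert (Rabs s * U < r).
    { apply (Rmult_lt_compat_r U) in Hs; [|lra]. unfold Rdiv in Hs.
      rewrite Rmult_assoc, Rinv_l, Rmult_1_r in Hs; lra. }
    pose proof (Rabs_pos s). pose proof (Rabs_pos (u i)). nra. }
  apply (pseries_zero_coef _ (r / U)); [apply Rdiv_lt_0_compat; lra|].
  intros s Hs. apply is_pseries_R. rewrite <- (Hid s).
  eapply is_series_ext;
    [|apply is_series_sumR; intros i Hi; apply is_pseries_neuron, Hsmall; auto].
  intros n; simpl. rewrite <- sumR_scal, Rmult_comm, <- sumR_scal.
  apply sumR_ext; intros; ring.
Qed.

End AnalyticAtZero.

Lemma dotR_curve d v s l : dotR d v (fun t => s * l ^ t) = s * peval d v l.
Proof. unfold peval, dotR. rewrite <- sumR_scal. apply sumR_ext; intros; ring. Qed.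

Lemma power_sum_coef_zero m (a be u : nat -> R) S :
  infinitely_often S ->
  (forall n, S n -> sumR m (fun i => a i * u i ^ n + INR n * be i * u i ^ (n - 1)) = 0) ->
  (forall i, (i < m)%nat -> u i <> 0) ->
  (forall i j, (i < m)%nat -> (j < m)%nat -> i <> j -> Rabs (u i) <> Rabs (u j)) ->
  forall i, (i < m)%nat -> a i = 0 /\ be i = 0.
Proof.
  intros HS Hsum Hu Hne i Hi.
  destruct (exp_poly_coef_zero m a (fun j => be j / u j) u S HS) with (i := i) as [Ha Hq]; auto.
  - intros n Sn. rewrite <- (Hsum n Sn). apply sumR_ext; intros j Hj.
    specialize (Hu j Hj). destruct n; simpl; [ring|].
    replace (n - 0)%nat with n by lia. field; auto.
  - split; auto. apply Rmult_integral in Hq. destruct Hq as [Hq|Hq]; auto.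
    exfalso; exact (Rinv_neq_0_compat _ (Hu i Hi) Hq).
Qed.

Theorem mainTheorem13 (sigma : R -> R) (d m : nat) (w : nat -> nat -> R) :
  real_analytic sigma ->
  (exists nj : nat -> nat,
      (forall j1 j2, nj j1 = nj j2 -> j1 = j2) /\
      (forall j, Derive_n sigma (nj j) 0 <> 0)) ->
  (forall i, (i < m)%nat -> exists t, (t < d)%nat /\ w i t <> 0) ->
  (forall k j, (k < j)%nat -> (j < m)%nat ->
      (exists t, (t < d)%nat /\ w k t <> w j t) /\
      (exists t, (t < d)%nat /\ w k t <> - w j t)) ->
  forall (a : nat -> R) (b : nat -> nat -> R),
    (forall x : nat -> R,
        sumR m (fun i =>
          a i * sigma (dotR d (w i) x)
          + sumR d (fun t => b i t * (Derive sigma (dotR d (w i) x) * x t))) = 0) ->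
    (forall i, (i < m)%nat -> a i = 0) /\
    (forall i t, (i < m)%nat -> (t < d)%nat -> b i t = 0).
Proof.
  intros Han [nj [Hinj Hder]] Hw0 Hwpm a b Hid.
  destruct (Han 0) as [r [Hr [c Hc0]]].
  assert (Hc : forall x, Rabs x < r -> is_pseries c x (sigma x)).
  { intros x Hx. rewrite <- (Rminus_0_r x) at 1. apply Hc0. rewrite Rminus_0_r; auto. }
  assert (HS : infinitely_often (fun n => c n <> 0)).
  { intros N. destruct (injective_infinitely_often nj Hinj N) as [n [Hn [j <-]]].
    exists (nj j); split; auto. intro Hcz. apply (Hder j).
    rewrite (Derive_n_at_0 sigma r c Hr Hc), Hcz. ring. }
  assert (Hcoef : forall l n, c n <> 0 -> sumR m (fun i => a i * peval d (w i) l ^ n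
               + INR n * peval d (b i) l * peval d (w i) l ^ (n - 1)) = 0).
  { intros l n Hcn. apply (Rmult_eq_reg_l (c n)); [rewrite Rmult_0_r|exact Hcn].
    apply (neuron_sum_coef sigma r c Hr Hc). intros s.
    rewrite <- (Hid (fun t => s * l ^ t)). apply sumR_ext; intros i Hi.
    rewrite dotR_curve. f_equal. unfold peval, dotR. rewrite <- sumR_scal.
    apply sumR_ext; intros; ring. }
  assert (Hvanish : Rbar_locally p_infty
            (fun l => forall i, (i < m)%nat -> a i = 0 /\ peval d (b i) l = 0)).
  { eapply filter_imp; [|exact (peval_eventually_generic d m w Hw0 Hwpm)].
    intros l [Hu Hne]. exact (power_sum_coef_zero m a _ _ _ HS (Hcoef l) Hu Hne). }
  split.
  - intros i Hi. destruct (filter_ex _ Hvanish) as [l Hl].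
    apply Hl; auto.
  - intros i t Hi Ht. apply NNPP; intro Hb.
    destruct (filter_ex _ (filter_and _ _ Hvanish
                (peval_eventually_nonzero d (b i) (ex_intro _ t (conj Ht Hb)))))
      as [l [Hl Hne]].
    apply Hne, Hl; auto.
Qed.
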